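(* Let $P\in\mathcal{P}$ and suppose $\nu:\mathcal{P}\to\mathcal{H}$ is pathwise differentiable at $P$ and that the local parameter space $\dot{\mathcal{H}}_P$ (the image of $\dot{\nu}_P$, equipped with the inner product of $\mathcal{H}$) is a reproducing kernel Hilbert space of real functions on a set $\mathcal{T}$, with feature map $t\mapsto K_t$. Define $\tilde{\phi}_P$ by $\tilde{\phi}_P(z)(t)=\dot{\nu}_P^*(K_t)(z)$ for $t\in\mathcal{T}$ and $P$-almost every $z$. Then: (i) if $\nu$ has an efficient influence function $\phi_P$ at $P$, then $\phi_P=\tilde{\phi}_P$ $P$-almost surely; (ii) if $\|\tilde{\phi}_P\|_{L^2(P;\mathcal{H})}<\infty$ (i.e. $\tilde\phi_P\in L^2(P;\mathcal H)$), then $\nu$ has an efficient influence function at $P$.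
   Context: Let $(\mathcal{Z},\mathbf{B})$ be a Polish space and $\mathcal{P}$ a set of probability distributions on it (the model), all dominated by a $\sigma$-finite measure $\lambda$. For $P\in\mathcal{P}$ and $s\in L^2(P)$, a submodel $\{P_\epsilon:\epsilon\in[0,\delta)\}\subset\mathcal{P}$ is quadratic mean differentiable at $P$ with score $s$ if $\|p_\epsilon^{1/2}-p^{1/2}-\epsilon s p^{1/2}/2\|_{L^2(\lambda)}=o(\epsilon)$ as $\epsilon\to0$, where $p_\epsilon=dP_\epsilon/d\lambda$, $p=dP/d\lambda$; $\mathscr{P}(P,\mathcal{P},s)$ denotes the set of such submodels. The tangent set at $P$ is $\{s\in L^2(P):\mathscr{P}(P,\mathcal{P},s)\neq\emptyset\}$ and the tangent space $\dot{\mathcal{P}}_P$ is its closed linear span in $L^2(P)$. $\mathcal{H}$ is a real separable Hilbert space. $\nu:\mathcal{P}\to\mathcal{H}$ is pathwise differentiable at $P$ if there is a continuous linear operator $\dot{\nu}_P:\dot{\mathcal{P}}_P\to\mathcal{H}$ (the local parameter) such that for every $s$ in the tangent set and every submodel in $\mathscr{P}(P,\mathcal{P},s)$, $\|\nu(P_\epsilon)-\nu(P)-\epsilon\dot{\nu}_P(s)\|_{\mathcal{H}}=o(\epsilon)$. Its Hilbert adjoint $\dot{\nu}_P^*:\mathcal{H}\to\dot{\mathcal{P}}_P$ is the efficient influence operator. Pointwise values $\dot{\nu}_P^*(h)(z)$ are taken from versions chosen so that $\{\dot{\nu}_P^*(h):h\in\mathcal{H}\}$ is a separable process: there exist a countable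 dense $\mathcal{H}'\subset\mathcal{H}$ and a $P$-probability-one set $\mathcal{Z}'$ such that for all $h\in\mathcal{H}$, $z\in\mathcal{Z}'$ there is a sequence $h_j\in\mathcal{H}'$ with $h_j\to h$ and $\dot{\nu}_P^*(h_j)(z)\to\dot{\nu}_P^*(h)(z)$. $\nu$ has efficient influence function (EIF) $\phi_P:\mathcal{Z}\to\mathcal{H}$ at $P$ if there is a $P$-probability-one set $\mathcal{Z}'$ with $\dot{\nu}_P^*(h)(z)=\langle h,\phi_P(z)\rangle_{\mathcal{H}}$ for all $h\in\mathcal{H}$, $z\in\mathcal{Z}'$. $L^2(P;\mathcal{H})$ is the space of Bochner measurable $f:\mathcal{Z}\to\mathcal{H}$ with $\|f\|_{L^2(P;\mathcal{H})}^2=\int\|f(z)\|_{\mathcal{H}}^2P(dz)<\infty$. *)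

From HB Require Import structures.
From mathcomp Require Import all_boot all_order all_algebra.
From mathcomp Require Import all_classical all_reals all_analysis.
Set Implicit Arguments. Unset Strict Implicit. Unset Printing Implicit Defensive.
Import Order.TTheory GRing.Theory Num.Theory.
Import numFieldNormedType.Exports.
Local Open Scope classical_set_scope.
Local Open Scope ring_scope.

Definition inner_product (R : realType) (H : normedModType R)
    (ip : H -> H -> R) : Prop :=
  (forall x y, ip x y = ip y x) /\
  (forall (a : R) (x y z : H), ip (a *: x + y) z = a * ip x z + ip y z) /\
  (forall x, ip x x = `|x| ^+ 2).

Definition separable_space (R : realType) (H : normedModType R) : Prop :=
  exists D : set H, countable D /\ closure D = setT.

(* the sigma-algebra of Z is the Borel sigma-algebra of a complete
   separable metric [dist] on Z *)
Definition polish_measurable d (Z : measurableType d) (R : realType) : Prop :=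
  exists dist : Z -> Z -> R,
    (forall x y, 0 <= dist x y) /\
    (forall x y, dist x y = 0 <-> x = y) /\
    (forall x y, dist x y = dist y x) /\
    (forall x y z, dist x z <= dist x y + dist y z) /\
    (forall u : nat -> Z,
       (forall e : R, 0 < e -> exists N, forall m n,
            (N <= m)%N -> (N <= n)%N -> dist (u m) (u n) < e) ->
       exists l, forall e : R, 0 < e -> exists N, forall n,
            (N <= n)%N -> dist (u n) l < e) /\
    (exists D : set Z, countable D /\
       forall x (e : R), 0 < e -> exists y, D y /\ dist x y < e) /\
    @measurable d Z =
      <<s [set A : set Z | forall x, A x ->
             exists e : R, 0 < e /\ forall y, dist x y < e -> A y] >>.

Section Setting.
Context d (Z : measurableType d) (R : realType).

Definition density_of (lam : {measure set Z -> \bar R})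
    (Q : set Z -> \bar R) (q : Z -> R) : Prop :=
  measurable_fun setT q /\ (forall z, 0 <= q z) /\
  forall A, measurable A -> Q A = (\int[lam]_(z in A) (q z)%:E)%E.

Definition L2 (P : probability Z R) (s : Z -> R) : Prop :=
  measurable_fun setT s /\ (\int[P]_z ((s z) ^+ 2)%:E < +oo)%E.

Definition l2norm (P : probability Z R) (s : Z -> R) : R :=
  Num.sqrt (fine (\int[P]_z ((s z) ^+ 2)%:E)).

Definition qmd_submodel (lam : {measure set Z -> \bar R})
    (M : set (probability Z R)) (P : probability Z R) (s : Z -> R)
    (Pe : R -> probability Z R) : Prop :=
  exists delta : R, 0 < delta /\
    (forall e, 0 <= e < delta -> M (Pe e)) /\
    exists (pe : R -> Z -> R) (p : Z -> R),
      density_of lam P p /\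
      (forall e, 0 <= e < delta -> density_of lam (Pe e) (pe e)) /\
      forall eta : R, 0 < eta -> exists d' : R, 0 < d' /\
        forall e, 0 < e < d' -> e < delta ->
          (\int[lam]_z ((Num.sqrt (pe e z) - Num.sqrt (p z)
                          - e * s z * Num.sqrt (p z) / 2) ^+ 2)%:E
             <= ((eta * e) ^+ 2)%:E)%E.

Definition tangent_set lam M P : set (Z -> R) :=
  [set s | L2 P s /\ exists Pe, qmd_submodel lam M P s Pe].

Definition lin_span (S : set (Z -> R)) : set (Z -> R) :=
  [set f | exists (n : nat) (c : 'I_n -> R) (g : 'I_n -> Z -> R),
     (forall i, S (g i)) /\ f = fun z => \sum_(i < n) c i * g i z].

(* closed linear span in L^2(P) of the tangent set *)
Definition tangent_space lam M P : set (Z -> R) :=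
  [set s | L2 P s /\ forall e : R, 0 < e -> exists u,
     lin_span (tangent_set lam M P) u /\
     (\int[P]_z ((s z - u z) ^+ 2)%:E < (e ^+ 2)%:E)%E].

(* A is a local parameter of nu at P (witness of pathwise
   differentiability): continuous linear on the tangent space *)
Definition local_parameter (H : normedModType R)
    (lam : {measure set Z -> \bar R}) (M : set (probability Z R))
    (P : probability Z R) (nu : probability Z R -> H)
    (A : (Z -> R) -> H) : Prop :=
  (forall (a : R) s1 s2, tangent_space lam M P s1 -> tangent_space lam M P s2 ->
      A (fun z => a * s1 z + s2 z) = a *: A s1 + A s2) /\
  (exists C : R, forall s, tangent_space lam M P s -> `|A s| <= C * l2norm P s) /\
  (forall s Pe, tangent_set lam M P s -> qmd_submodel lam M P s Pe ->
     forall eta : R, 0 < eta -> exists d' : R, 0 < d' /\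
       forall e, 0 < e < d' -> `|nu (Pe e) - nu P - e *: A s| <= eta * e).

(* Astar gives versions of the Hilbert adjoint of A *)
Definition adjoint_version (H : normedModType R) (P : probability Z R)
    (TSp : set (Z -> R)) (A : (Z -> R) -> H) (ip : H -> H -> R)
    (Astar : H -> Z -> R) : Prop :=
  (forall h, TSp (Astar h)) /\
  forall s h, TSp s ->
    (\int[P]_z (s z * Astar h z)%:E = (ip (A s) h)%:E)%E.

Definition separable_version (H : normedModType R) (P : probability Z R)
    (Astar : H -> Z -> R) : Prop :=
  exists (H' : set H) (Z' : set Z),
    countable H' /\ closure H' = setT /\ measurable Z' /\ P Z' = 1%E /\
    forall h z, Z' z -> exists hj : nat -> H,
      (forall j, H' (hj j)) /\ hj @ \oo --> h /\
      (fun j => Astar (hj j) z) @ \oo --> Astar h z.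

Definition is_eif (H : normedModType R) (P : probability Z R)
    (ip : H -> H -> R) (Astar : H -> Z -> R) (phi : Z -> H) : Prop :=
  exists Z' : set Z, measurable Z' /\ P Z' = 1%E /\
    forall h z, Z' z -> Astar h z = ip h (phi z).

Definition simple_H (H : normedModType R) (f : Z -> H) : Prop :=
  finite_set (range f) /\ forall y, measurable (f @^-1` [set y]).

Definition bochner_measurable (H : normedModType R) (P : probability Z R)
    (g : Z -> H) : Prop :=
  exists fn : nat -> Z -> H, (forall n, simple_H (fn n)) /\
    exists Z' : set Z, measurable Z' /\ P Z' = 1%E /\
      forall z, Z' z -> (fun n => fn n z) @ \oo --> g z.

Definition L2H (H : normedModType R) (P : probability Z R) (g : Z -> H) : Prop :=
  bochner_measurable P g /\ (\int[P]_z ((`|g z|) ^+ 2)%:E < +oo)%E.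

End Setting.

(* V (with the inner product of H), identified through [ev] with a space
   of real functions on T, is a reproducing kernel Hilbert space with
   feature map K *)
Definition rkhs_structure (R : realType) (H : normedModType R) (V : set H)
    (ip : H -> H -> R) (T : Type) (ev : H -> T -> R) (K : T -> H) : Prop :=
  closed V /\
  (forall (a : R) u v, V u -> V v -> ev (a *: u + v) = (fun t => a * ev u t + ev v t)) /\
  (forall u v, V u -> V v -> ev u = ev v -> u = v) /\
  (forall t, V (K t)) /\
  (forall h t, V h -> ev h t = ip h (K t)).

(* Let V be the range of the local parameter A, and note that Astar h = 0
   a.e. whenever h is orthogonal to V, because the integral of (Astar h)^2 is
   ip (A (Astar h)) h.
   (i) An efficient influence function phi satisfies Astar h = ip h (phi z)
   for almost every z simultaneously for all h.  Testing this on the residuals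
   x - proj_V x of a countable dense set of x shows that phi z is orthogonal to
   all of them, which forces phi z into V; its evaluation at t is then
   ip (phi z) (K t) = Astar (K t) z.
   (ii) Conversely, let g take values in V with evaluations Astar (K t).  The
   set S of h with Astar h = ip h g a.e. is a closed subspace (Astar is
   bounded into L^2, and an a.e. limit of an L^2-null sequence vanishes a.e.)
   containing the orthogonal of V and every K t.  So the orthogonal of S lies
   in V and is orthogonal to every K t, hence is 0 since evaluation is
   injective on V: S is the whole space.  A countable dense set and the
   separability of the version Astar then turn "for each h, almost surely"
   into "almost surely, for all h". *)

From HB Require Import structures.
From mathcomp Require Import all_boot all_order all_algebra.
From mathcomp Require Import all_classical all_reals all_analysis.
From mathcomp Require Import measurable_realfun.
From mathcomp Require Import ring lra.
Set Implicit Arguments. Unset Strict Implicit. Unset Printing Implicit Defensive.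
Import Order.TTheory GRing.Theory Num.Theory.
Import numFieldNormedType.Exports.
Local Open Scope classical_set_scope.
Local Open Scope ring_scope.

Section InnerProduct.
Context (R : realType) (H : normedModType R) (ip : H -> H -> R).
Hypothesis ipH : inner_product ip.

Definition orthogonal (W : set H) : set H := [set u | forall v, W v -> ip u v = 0].

(* Defaults to [0] when [x] has no orthogonal projection onto [W]. *)
Definition orth_proj (W : set H) (x : H) : H :=
  xget 0 [set w | W w /\ orthogonal W (x - w)].

Lemma ipC x y : ip x y = ip y x. Proof. by case: ipH. Qed.

Lemma ipZDl a x y z : ip (a *: x + y) z = a * ip x z + ip y z.
Proof. by case: ipH => _ []. Qed.

Lemma ipxx x : ip x x = `|x| ^+ 2. Proof. by case: ipH => _ []. Qed.

Lemma ip0l z : ip 0 z = 0.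
Proof. by have := ipZDl (-1) 0 0 z; rewrite scaler0 addr0 mulN1r addNr. Qed.

Lemma ipDl x y z : ip (x + y) z = ip x z + ip y z.
Proof. by have := ipZDl 1 x y z; rewrite scale1r mul1r. Qed.

Lemma ipZl a x z : ip (a *: x) z = a * ip x z.
Proof. by have := ipZDl a x 0 z; rewrite !addr0 ip0l addr0. Qed.

Lemma ipNl x z : ip (- x) z = - ip x z.
Proof. by rewrite -scaleN1r ipZl mulN1r. Qed.

Lemma ipBl x y z : ip (x - y) z = ip x z - ip y z.
Proof. by rewrite ipDl ipNl. Qed.

Lemma ip0r z : ip z 0 = 0. Proof. by rewrite ipC ip0l. Qed.

Lemma ipDr x y z : ip z (x + y) = ip z x + ip z y.
Proof. by rewrite ipC ipDl !(ipC z). Qed.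

Lemma ipZr a x z : ip z (a *: x) = a * ip z x.
Proof. by rewrite ipC ipZl ipC. Qed.

Lemma ipNr x z : ip z (- x) = - ip z x.
Proof. by rewrite ipC ipNl ipC. Qed.

Lemma ipBr x y z : ip z (x - y) = ip z x - ip z y.
Proof. by rewrite ipDr ipNr. Qed.

Lemma ipxx_eq0 x : (ip x x == 0) = (x == 0).
Proof. by rewrite ipxx sqrf_eq0 normr_eq0. Qed.

Lemma cauchy_schwarz x y : `|ip x y| <= `|x| * `|y|.
Proof.
have ip_sqr_le : ip x y ^+ 2 <= ip x x * ip y y.
  have [->|y_neq0] := eqVneq y 0; first by rewrite !ip0r expr0n mulr0.
  have yy_gt0 : 0 < ip y y by rewrite ipxx exprn_gt0 ?normr_gt0.
  have := sqr_ge0 `|ip y y *: x - ip x y *: y|.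
  rewrite -ipxx !(ipBl, ipBr, ipZl, ipZr) (ipC y x).
  nra.
rewrite -ler_sqr ?nnegrE ?mulr_ge0 // exprMn -!ipxx real_normK ?num_real //.
Qed.

Lemma parallelogram (x y : H) :
  `|x + y| ^+ 2 + `|x - y| ^+ 2 = 2 * (`|x| ^+ 2 + `|y| ^+ 2).
Proof. by rewrite -!ipxx !(ipDl, ipDr, ipNl, ipNr) (ipC y x); ring. Qed.

Lemma near_minimizers_close (x u v : H) (delta e1 e2 : R) :
  delta <= `|x - 2^-1 *: (u + v)| ^+ 2 ->
  `|x - u| ^+ 2 < delta + e1 -> `|x - v| ^+ 2 < delta + e2 ->
  `|u - v| ^+ 2 <= 2 * e1 + 2 * e2.
Proof.
move=> mid_ge u_lt v_lt; have := parallelogram (x - u) (x - v).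
have -> : x - u + (x - v) = 2 *: (x - 2^-1 *: (u + v)).
  rewrite scalerBr scalerA divff ?pnatr_eq0 // scale1r.
  by rewrite scaler_nat mulr2n opprD addrACA.
have -> : x - u - (x - v) = v - u by rewrite opprB addrC addrA subrK.
rewrite normrZ exprMn ger0_norm // (distrC v); lra.
Qed.

Lemma ipl_continuous y : continuous (ip ^~ y).
Proof.
move=> x; apply/cvgrPdist_lt => e e_gt0.
have ey_gt0 : 0 < e / (`|y| + 1) by rewrite divr_gt0 // ltr_wpDl.
near=> x'.
rewrite -ipBl (le_lt_trans (cauchy_schwarz _ _)) //.
have : `|x - x'| < e / (`|y| + 1) by near: x'; exact: cvgr_dist_lt.
rewrite ltr_pdivlMr ?ltr_wpDl // => xx'_lt.
have := normr_ge0 y; have := normr_ge0 (x - x'); nra.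
Unshelve. all: by end_near. Qed.

Lemma cvg_ipl I (F : set_system I) {FF : Filter F} (f : I -> H) x y :
  f @ F --> x -> (fun i => ip (f i) y) @ F --> ip x y.
Proof. exact: continuous_cvg (@ipl_continuous y x). Qed.

Lemma ip_dense_eq0 (D : set H) r : closure D = setT ->
  (forall x, D x -> ip x r = 0) -> r = 0.
Proof.
move=> D_dense Dr.
have /closure_id E : closed ((ip ^~ r) @^-1` [set 0]).
  by move/continuous_closedP : (@ipl_continuous r); apply; exact: closed_eq.
have /(closureS Dr) : closure D r by rewrite D_dense.
by rewrite -E => /eqP; rewrite ipxx_eq0 => /eqP.
Qed.

Lemma best_approx_orthogonal (W : set H) x w :
  (forall a u v, W u -> W v -> W (a *: u + v)) -> W w ->
  (forall u, W u -> `|x - w| <= `|x - u|) -> orthogonal W (x - w).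
Proof.
move=> W_lin Ww w_min u Wu.
have /= tc_le t : 2 * t * ip (x - w) u <= t ^+ 2 * `|u| ^+ 2.
  have := w_min _ (W_lin t u w Wu Ww).
  rewrite -ler_sqr ?nnegrE // opprD addrA addrAC.
  move: (x - w) => y; rewrite -!ipxx !(ipBl, ipBr, ipZl, ipZr) (ipC u y).
  nra.
set c := ip (x - w) u in tc_le *; set b := `|u| ^+ 2 in tc_le *.
have b_ge0 : 0 <= b by exact: sqr_ge0.
have := tc_le (c / (b + 1)).
set s := c / (b + 1); have -> : c = s * (b + 1) by rewrite divfK // gt_eqF // ltr_wpDl.
move=> s_le; have : s ^+ 2 * (b + 2) <= 0 by nra.
rewrite pmulr_lle0 ?ltr_wpDl // => s2_le0.
have -> : s = 0 by nra.
by rewrite mul0r.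
Qed.

End InnerProduct.

Section Projection.
Context (R : realType) (H : completeNormedModType R) (ip : H -> H -> R).
Hypothesis ipH : inner_product ip.
Variable W : set H.
Hypotheses (W_closed : closed W) (W0 : W 0).
Hypothesis W_lin : forall a u v, W u -> W v -> W (a *: u + v).

Lemma harmonic_cauchy_cvg (u : nat -> H) :
  (forall n m, `|u n - u m| ^+ 2 <= 2 * harmonic n + 2 * harmonic m) ->
  cvg (u @ \oo).
Proof.
move=> u_near; apply/cauchy_cvgP/cauchy_exP => e e_gt0.
have e4_gt0 : 0 < e ^+ 2 / 4 by rewrite divr_gt0 // exprn_gt0.
have harmonic_lt := near_infty_natSinv_lt (PosNum e4_gt0).
near \oo => N; exists (u N).
suff : \forall n \near \oo, ball (u N) e (u n) by [].
near=> n; rewrite -ball_normE /ball_ /= -ltr_sqr ?nnegrE ?(ltW e_gt0) //.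
apply: (le_lt_trans (u_near N n)).
have : harmonic N < e ^+ 2 / 4 by near: N.
have : harmonic n < e ^+ 2 / 4 by near: n.
lra.
Unshelve. all: by end_near. Qed.

Lemma exists_best_approx x :
  exists2 w, W w & forall u, W u -> `|x - w| <= `|x - u|.
Proof.
pose E := [set `|x - u| ^+ 2 | u in W].
have E_lb : has_lbound E by exists 0 => _ [u _ <-]; exact: sqr_ge0.
have E_n0 : nonempty E by exists (`|x - 0| ^+ 2), 0.
have inf_le u : W u -> inf E <= `|x - u| ^+ 2.
  by move=> Wu; apply: ge_inf => //; exists u.
have /choice[w_ w_min] : forall n, exists w, W w /\ `|x - w| ^+ 2 < inf E + harmonic n.
  move=> n; have [_ [w Ww <-] ?] := inf_adherent (harmonic_gt0 n) (conj E_n0 E_lb).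
  by exists w.
have w_near n m : `|w_ n - w_ m| ^+ 2 <= 2 * harmonic n + 2 * harmonic m.
  have [Wn wn_lt] := w_min n; have [Wm wm_lt] := w_min m.
  apply: (near_minimizers_close ipH _ wn_lt wm_lt); apply: inf_le.
  by have := W_lin 2^-1 (W_lin 1 Wn Wm) W0; rewrite scale1r addr0.
have w_cvg := harmonic_cauchy_cvg w_near.
set w := lim (w_ @ \oo).
exists w.
  by apply: (closed_cvg _ W_closed _ _ w_cvg); apply: nearW => n; case: (w_min n).
move=> u Wu.
rewrite -ler_sqr ?nnegrE //; apply: le_trans (inf_le _ Wu).
apply: (@ler_cvg_to _ \oo _ _ (fun n => `|x - w_ n| ^+ 2)
  (fun n => inf E + harmonic n)).
- have x_w : (fun n => x - w_ n) @ \oo --> x - w by apply: cvgB => //; exact: cvg_cst.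
  by apply: cvgM; exact: cvg_norm x_w.
- by rewrite -[X in _ --> X]addr0; apply: cvgD; [exact: cvg_cst|exact: cvg_harmonic].
- by apply: nearW => n; exact: ltW (w_min n).2.
Qed.

Lemma orth_projP x : W (orth_proj ip W x) /\ orthogonal ip W (x - orth_proj ip W x).
Proof.
apply: (@xgetPex _ (0 : H) [set w | W w /\ orthogonal ip W (x - w)]).
have [w Ww w_min] := exists_best_approx x.
by exists w; split => //; exact: (best_approx_orthogonal ipH W_lin Ww w_min).
Qed.

Lemma orthogonal_sub_swap (S : set H) :
  orthogonal ip W `<=` S -> orthogonal ip S `<=` W.
Proof.
move=> WS r rS; have [Pr_W r_Pr_perp] := orth_projP r.
have /rS r_Pr : S (r - orth_proj ip W r) by exact: WS.
have Pr_perp := r_Pr_perp _ Pr_W; rewrite (ipC ipH) in Pr_perp.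
have /eqP : ip (r - orth_proj ip W r) (r - orth_proj ip W r) = 0.
  by rewrite (ipBl ipH) r_Pr Pr_perp subr0.
by rewrite (ipxx_eq0 ipH) subr_eq0 => /eqP ->.
Qed.

Lemma dense_residuals_orthogonal_mem (D : set H) y : closure D = setT ->
  (forall x, D x -> ip (x - orth_proj ip W x) y = 0) -> W y.
Proof.
move=> D_dense D_perp; have [Py_W y_Py_perp] := orth_projP y.
suff /eqP : y - orth_proj ip W y = 0 by rewrite subr_eq0 => /eqP ->.
apply: (ip_dense_eq0 ipH D_dense) => x Dx.
have [Px_W x_Px_perp] := orth_projP x.
rewrite -[x](subrK (orth_proj ip W x)) (ipDl ipH) (ipBr ipH) D_perp // x_Px_perp //.
by rewrite subrr add0r (ipC ipH) y_Py_perp.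
Qed.

End Projection.

Section L2.
Context d (T : measurableType d) (R : realType) (P : probability T R).

Lemma ae_prob1P (Q : T -> Prop) : {ae P, forall z, Q z} <->
  exists Z', [/\ measurable Z', P Z' = 1%E & forall z, Z' z -> Q z].
Proof.
split=> [[N [mN N0 NQ]]|[Z' [mZ' PZ' Z'Q]]].
  exists (~` N); split; first exact: measurableC.
    by rewrite probability_setC // N0 sube0.
  by move=> z Nz; apply: contrapT => nQz; exact: Nz (NQ z nQz).
exists (~` Z'); split; first exact: measurableC.
  by rewrite probability_setC // PZ' subee.
by move=> z /= nQz Z'z; exact: nQz (Z'Q z Z'z).
Qed.

Lemma ae_forall_countable (I : Type) (D : set I) (Q : I -> T -> Prop) :
  countable D -> (forall i, D i -> {ae P, forall z, Q i z}) ->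
  {ae P, forall z, forall i, D i -> Q i z}.
Proof.
move=> /countable_injP[f f_inj] DQ.
have : forall n, {ae P, forall z, forall i, D i -> f i = n -> Q i z}.
  move=> n; have [[i [Di <-]]|no_i] := pselect (exists i, D i /\ f i = n).
    apply: filterS (DQ i Di) => z Qiz j Dj fji.
    by rewrite (f_inj j i) ?inE.
  by apply: aeW => z i Di fin; case: no_i; exists i.
by move/ae_foralln; apply: filterS => z DQz i Di; exact: DQz (f i) i Di erefl.
Qed.

Lemma measurable_EFin_sqr (D : set T) (f : T -> R) : measurable_fun D f ->
  measurable_fun D (fun z => ((f z) ^+ 2)%:E).
Proof. by move=> mf; apply/measurable_EFinP; exact: measurable_funX. Qed.

Lemma integral_sqr_lin_le (a : R) (f g : T -> R) :
  measurable_fun setT f -> measurable_fun setT g ->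
  (\int[P]_z ((a * f z + g z) ^+ 2)%:E <=
   (2 * a ^+ 2)%:E * \int[P]_z ((f z) ^+ 2)%:E + 2%:E * \int[P]_z ((g z) ^+ 2)%:E)%E.
Proof.
move=> mf mg.
have sqrE_ge0 (h : T -> R) z : setT z -> (0 <= ((h z) ^+ 2)%:E)%E.
  by move=> _; rewrite lee_fin sqr_ge0.
have mf2 := measurable_EFin_sqr mf; have mg2 := measurable_EFin_sqr mg.
have a2_ge0 : 0 <= 2 * a ^+ 2 by rewrite mulr_ge0 ?sqr_ge0.
rewrite -(ge0_integralZl_EFin _ measurableT (sqrE_ge0 f) mf2 a2_ge0).
rewrite -(ge0_integralZl_EFin _ measurableT (sqrE_ge0 g) mg2 (ler0n _ 2)).
rewrite -ge0_integralD //; last 4 first.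
- by move=> z _; rewrite -EFinM lee_fin mulr_ge0 ?sqr_ge0.
- exact: measurable_funeM.
- by move=> z _; rewrite -EFinM lee_fin mulr_ge0 ?sqr_ge0.
- exact: measurable_funeM.
apply: ge0_le_integral => //.
- exact: sqrE_ge0.
- by apply: measurable_EFin_sqr; apply: measurable_funD => //; exact: measurable_funM.
- by apply: emeasurable_funD; exact: measurable_funeM.
- move=> z _; rewrite -!EFinM -EFinD lee_fin.
  have := sqr_ge0 (a * f z - g z); nra.
Qed.

Lemma L2_lin (a : R) (f g : T -> R) :
  L2 P f -> L2 P g -> L2 P (fun z => a * f z + g z).
Proof.
move=> [mf f2_fin] [mg g2_fin]; split.
  by apply: measurable_funD => //; exact: measurable_funM.
apply: le_lt_trans (integral_sqr_lin_le a mf mg) _.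
by rewrite lte_add_pinfty // lte_mul_pinfty // lee_fin mulr_ge0 ?sqr_ge0.
Qed.

Lemma L2_integrable_sqr (f : T -> R) :
  L2 P f -> P.-integrable setT (fun z => ((f z) ^+ 2)%:E).
Proof.
move=> [mf f2_fin]; apply/integrableP; split; first exact: measurable_EFin_sqr.
by under eq_integral do rewrite gee0_abs ?lee_fin ?sqr_ge0 //.
Qed.

Lemma L2_integrableM (f g : T -> R) :
  L2 P f -> L2 P g -> P.-integrable setT (fun z => (f z * g z)%:E).
Proof.
move=> f_L2 g_L2.
have fg2_int :=
  integrableD measurableT (L2_integrable_sqr f_L2) (L2_integrable_sqr g_L2).
apply: (le_integrable measurableT _ _ fg2_int).
  by apply/measurable_EFinP; apply: measurable_funM; [case: f_L2|case: g_L2].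
move=> z _ /=; rewrite lee_fin normrM [X in _ <= X]ger0_norm ?addr_ge0 ?sqr_ge0 //.
rewrite -(real_normK (num_real (f z))) -(real_normK (num_real (g z))).
have := sqr_ge0 (`|f z| - `|g z|); nra.
Qed.

Lemma L2_integral_linr (s : T -> R) (a : R) (f g : T -> R) :
  L2 P s -> L2 P f -> L2 P g ->
  (\int[P]_z (s z * (a * f z + g z))%:E =
   a%:E * \int[P]_z (s z * f z)%:E + \int[P]_z (s z * g z)%:E)%E.
Proof.
move=> s_L2 f_L2 g_L2.
have sf_int := L2_integrableM s_L2 f_L2; have sg_int := L2_integrableM s_L2 g_L2.
under eq_integral do rewrite mulrDr mulrCA EFinD EFinM.
by rewrite integralD ?integralZl //; exact: integrableZl.
Qed.

Lemma integral_sqr_eq0_ae (f : T -> R) : measurable_fun setT f ->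
  (\int[P]_z ((f z) ^+ 2)%:E = 0)%E -> {ae P, forall z, f z = 0}.
Proof.
move=> mf f2_eq0.
have /(ae_eq_integral_abs P measurableT (measurable_EFin_sqr mf)) : 
    (\int[P]_z `|((f z) ^+ 2)%:E| = 0)%E.
  by under eq_integral do rewrite gee0_abs ?lee_fin ?sqr_ge0 //.
by apply: filterS => z /(_ I) [] /eqP; rewrite sqrf_eq0 => /eqP.
Qed.

End L2.

Section AeLimit.
Context d (T : measurableType d) (R : realType) (mu : {measure set T -> \bar R}).

Lemma ae_limit_L2_null_eq0 (f : (T -> R)^nat) (F : T -> R) :
  (forall n, measurable_fun setT (f n)) ->
  {ae mu, forall z, f ^~ z @ \oo --> F z} ->
  (fun n => \int[mu]_z ((f n z) ^+ 2)%:E)%E @ \oo --> 0%E ->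
  {ae mu, forall z, F z = 0}.
Proof.
move=> mf [N [mN N0 fN]] f2_to0.
pose D := ~` N; have mD : measurable D := measurableC mN.
have fD z : D z -> f ^~ z @ \oo --> F z by move=> Dz; apply: contrapT => /fN.
have mfD n : measurable_fun D (f n) :=
  measurable_funS measurableT (@subsetT _ D) (mf n).
have mFD : measurable_fun D F := measurable_fun_cvg mfD fD.
have sqrE_ge0 (A : set T) (h : T -> R) z : A z -> (0 <= ((h z) ^+ 2)%:E)%E.
  by move=> _; rewrite lee_fin sqr_ge0.
have fD2_to0 : (fun n => \int[mu]_(z in D) ((f n z) ^+ 2)%:E)%E @ \oo --> 0%E.
  apply: (squeeze_cvge _ (cvg_cst 0%E) f2_to0); apply: nearW => n.
  rewrite integral_ge0 /=; last exact: sqrE_ge0.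
  exact: (@ge0_subset_integral _ _ _ mu D setT mD measurableT _
    (measurable_EFin_sqr (mf n)) (@sqrE_ge0 setT (f n)) (@subsetT _ D)).
have f2D z : D z -> ((f n z) ^+ 2)%:E @[n --> \oo] --> ((F z) ^+ 2)%:E.
  by move=> Dz; apply: cvg_EFin; [exact: nearW|apply: cvgM; exact: fD].
have := fatou mu mD (fun n => measurable_EFin_sqr (mfD n)) (fun n => @sqrE_ge0 D (f n)).
rewrite (cvg_limn_einf_sup fD2_to0).1.
under eq_integral => z /set_mem Dz.
  rewrite (cvg_limn_einf_sup (f2D z Dz)).1.
  over.
move=> F2_le0.
have F2_eq0 : (\int[mu]_(z in D) `|((F z) ^+ 2)%:E| = 0)%E.
  apply/eqP; rewrite eq_le integral_ge0 ?andbT //.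
  by under eq_integral => z Dz do rewrite gee0_abs ?lee_fin ?sqr_ge0 //.
have [N' [mN' N'0 F2N']] :=
  (ae_eq_integral_abs mu mD (measurable_EFin_sqr mFD)).1 F2_eq0.
exists (N `|` N'); split; [exact: measurableU|by rewrite measureU0|].
move=> z /= F_neq0; apply: contrapT => /not_orP[Nz N'z].
apply: N'z; apply: F2N' => /(_ Nz) /= /eqP.
by rewrite eqe sqrf_eq0 => /eqP.
Qed.

End AeLimit.

Section TangentSpace.
Context d (Z : measurableType d) (R : realType).
Implicit Types (S : set (Z -> R)) (u v : Z -> R).

Lemma lin_span_lin S a u v : lin_span S u -> lin_span S v ->
  lin_span S (fun z => a * u z + v z).
Proof.
move=> [n [c [g [Sg ->]]]] [m [c' [g' [Sg' ->]]]].
pose split_fun T (f : 'I_n -> T) (f' : 'I_m -> T) (i : 'I_(n + m)) :=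
  match fintype.split i with inl j => f j | inr j => f' j end.
exists (n + m)%N, (split_fun _ (fun j => a * c j) c'), (split_fun _ g g'); split.
  by move=> i; rewrite /split_fun; case: (fintype.split i).
apply: funext => z; rewrite big_split_ord mulr_sumr; congr (_ + _).
  by apply: eq_bigr => i _; rewrite /split_fun (unsplitK (inl i)) mulrA.
by apply: eq_bigr => i _; rewrite /split_fun (unsplitK (inr i)).
Qed.

Lemma measurable_lin_span S u : (forall s, S s -> measurable_fun setT s) ->
  lin_span S u -> measurable_fun setT u.
Proof.
move=> mS [n [c [g [Sg ->]]]]; apply: measurable_sum => i.
by apply: measurable_funM => //; exact: mS.
Qed.

Variables (lam : {measure set Z -> \bar R}) (M : set (probability Z R)).
Variable P : probability Z R.

Lemma tangent_space_lin a u v : tangent_space lam M P u -> tangent_space lam M P v ->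
  tangent_space lam M P (fun z => a * u z + v z).
Proof.
move=> [u_L2 u_approx] [v_L2 v_approx]; split; first exact: L2_lin.
move=> e e_gt0.
have c_gt0 : 0 < 2 * (`|a| + 1) by rewrite mulr_gt0 // ltr_wpDl.
have del_gt0 : 0 < e / (2 * (`|a| + 1)) by rewrite divr_gt0.
have [u' [u'_span u'_close]] := u_approx _ del_gt0.
have [v' [v'_span v'_close]] := v_approx _ del_gt0.
exists (fun z => a * u' z + v' z); split; first exact: lin_span_lin.
have m_span w : lin_span (tangent_set lam M P) w -> measurable_fun setT w.
  by apply: measurable_lin_span => s [[]].
have mu : measurable_fun setT (fun z => u z - u' z).
  by apply: measurable_funB; [case: u_L2|exact: m_span].
have mv : measurable_fun setT (fun z => v z - v' z).
  by apply: measurable_funB; [case: v_L2|exact: m_span].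
under eq_integral do rewrite opprD addrACA -mulrBr.
apply: le_lt_trans (integral_sqr_lin_le P a mu mv) _.
move: u'_close v'_close; set del := e / _.
set I1 := (\int[P]_z _)%E; set I2 := (\int[P]_z _)%E => I1_lt I2_lt.
have I1_ge0 : (0 <= I1)%E by apply: integral_ge0 => z _; rewrite lee_fin sqr_ge0.
have I2_ge0 : (0 <= I2)%E by apply: integral_ge0 => z _; rewrite lee_fin sqr_ge0.
have I1_fin : I1 \is a fin_num by rewrite ge0_fin_numE // (lt_trans I1_lt) ?ltry.
have I2_fin : I2 \is a fin_num by rewrite ge0_fin_numE // (lt_trans I2_lt) ?ltry.
move: I1_lt I2_lt I1_ge0 I2_ge0; rewrite -(fineK I1_fin) -(fineK I2_fin).
rewrite !lte_fin !lee_fin.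
have e_del : e = del * (2 * (`|a| + 1)) by rewrite divfK ?gt_eqF.
rewrite e_del -(real_normK (num_real a)).
have := normr_ge0 a; have := ltW del_gt0; nra.
Qed.

End TangentSpace.

Section Adjoint.
Context d (Z : measurableType d) (R : realType) (P : probability Z R).
Context (H : completeNormedModType R) (ip : H -> H -> R).
Variables (TS : set (Z -> R)) (A : (Z -> R) -> H) (Astar : H -> Z -> R).
Hypothesis ipH : inner_product ip.
Hypothesis TS_L2 : forall s, TS s -> L2 P s.
Hypothesis TS_lin : forall a s1 s2, TS s1 -> TS s2 -> TS (fun z => a * s1 z + s2 z).
Hypothesis A_lin : forall a s1 s2, TS s1 -> TS s2 ->
  A (fun z => a * s1 z + s2 z) = a *: A s1 + A s2.
Hypothesis A_bounded : exists C, forall s, TS s -> `|A s| <= C * l2norm P s.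
Hypothesis Astar_adj : adjoint_version P TS A ip Astar.
Local Notation V := (A @` TS).

Lemma TS_Astar h : TS (Astar h). Proof. by case: Astar_adj. Qed.

Lemma integral_Astar s h : TS s ->
  (\int[P]_z (s z * Astar h z)%:E = (ip (A s) h)%:E)%E.
Proof. by case: Astar_adj => _; apply. Qed.

Lemma TS0 : TS (fun=> 0).
Proof.
have := TS_lin (-1) (TS_Astar 0) (TS_Astar 0).
by congr TS; apply: funext => z; rewrite mulN1r addNr.
Qed.

Lemma A0 : A (fun=> 0) = 0.
Proof.
have := A_lin (-1) TS0 TS0; rewrite scaleN1r addNr => <-.
by congr A; apply: funext => z; rewrite mulr0 addr0.
Qed.

Lemma V0 : V 0. Proof. by exists (fun=> 0); [exact: TS0|exact: A0]. Qed.

Lemma V_lin a u v : V u -> V v -> V (a *: u + v).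
Proof.
move=> [s1 TSs1 <-] [s2 TSs2 <-].
by exists (fun z => a * s1 z + s2 z); [exact: TS_lin|exact: A_lin].
Qed.

Lemma TS_orthogonal_ae0 f : TS f ->
  (forall s, TS s -> \int[P]_z (s z * f z)%:E = 0)%E -> {ae P, forall z, f z = 0}.
Proof.
move=> TSf f_perp; apply: integral_sqr_eq0_ae; first by case: (TS_L2 TSf).
by rewrite -(f_perp _ TSf); apply: eq_integral => z _; rewrite expr2.
Qed.

Lemma Astar_orthogonal_ae0 h : orthogonal ip V h -> {ae P, forall z, Astar h z = 0}.
Proof.
move=> h_perp; apply: TS_orthogonal_ae0 (TS_Astar h) _ => s TSs.
by rewrite integral_Astar // (ipC ipH) h_perp //; exists s.
Qed.

Lemma Astar_lin_ae a h1 h2 :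
  {ae P, forall z, Astar (a *: h1 + h2) z = a * Astar h1 z + Astar h2 z}.
Proof.
pose f z := -1 * (a * Astar h1 z + Astar h2 z) + Astar (a *: h1 + h2) z.
have TSf : TS f by apply: TS_lin; [apply: TS_lin|]; exact: TS_Astar.
suff : {ae P, forall z, f z = 0} by apply: filterS => z; rewrite /f; lra.
apply: TS_orthogonal_ae0 TSf _ => s TSs.
have L2A h := TS_L2 (TS_Astar h); have L2s := TS_L2 TSs.
have L2_lin12 := L2_lin a (L2A h1) (L2A h2).
rewrite /f !L2_integral_linr // !(integral_Astar _ TSs).
by rewrite (ipDr ipH) (ipZr ipH) -!EFinM -!EFinD; congr (_%:E); ring.
Qed.

(* The integral of (Astar x)^2 is ip (A (Astar x)) x <= C * l2norm (Astar x) * `|x|. *)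
Lemma Astar_bounded : exists C, forall x,
  (\int[P]_z ((Astar x z) ^+ 2)%:E <= ((C * `|x|) ^+ 2)%:E)%E.
Proof.
have [C A_le] := A_bounded; exists `|C| => x.
have TSu := TS_Astar x; set u := Astar x in TSu *.
have u2E : (\int[P]_z ((u z) ^+ 2)%:E = (ip (A u) x)%:E)%E.
  by rewrite -integral_Astar //; apply: eq_integral => z _; rewrite expr2.
have := A_le _ TSu; rewrite /l2norm u2E /= lee_fin.
set n := ip (A u) x in u2E * => Au_le.
have n_ge0 : 0 <= n.
  by rewrite -lee_fin -u2E; apply: integral_ge0 => z _; rewrite lee_fin sqr_ge0.
have n_le : n <= `|C| * Num.sqrt n * `|x|.
  apply: le_trans (ler_norm _) _; apply: le_trans (cauchy_schwarz ipH _ _) _.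
  apply: ler_wpM2r => //; apply: le_trans Au_le _.
  by apply: ler_wpM2r (ler_norm C); exact: sqrtr_ge0.
have r_ge0 := sqrtr_ge0 n; set r := Num.sqrt n in n_le r_ge0.
have nE : n = r ^+ 2 by rewrite sqr_sqrtr.
rewrite nE in n_le *; have := normr_ge0 x; have := normr_ge0 C; nra.
Qed.

Lemma Astar_L2_cvg (h_ : nat -> H) h : h_ @ \oo --> h ->
  (fun n => \int[P]_z ((Astar h z - Astar (h_ n) z) ^+ 2)%:E)%E @ \oo --> 0%E.
Proof.
move=> h_h; have [C Astar_le] := Astar_bounded.
have dist_to0 : (fun n => C * `|h - h_ n|) @ \oo --> 0.
  rewrite -(mulr0 C); apply: cvgM; first exact: cvg_cst.
  apply/cvgrPdist_lt => e e_gt0; near=> n.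
  by rewrite sub0r normrN normr_id; near: n; exact: cvgr_dist_lt.
apply: (squeeze_cvge (f := cst 0%E) (h := fun n => ((C * `|h - h_ n|) ^+ 2)%:E)).
- apply: nearW => n.
  rewrite integral_ge0 /=; last by move=> z _; rewrite lee_fin sqr_ge0.
  have mA x : measurable_fun setT (Astar x) by case: (TS_L2 (TS_Astar x)).
  rewrite (ae_eq_integral (fun z => ((Astar (h - h_ n) z) ^+ 2)%:E)) ?Astar_le //.
  + by apply: measurable_EFin_sqr; exact: measurable_funB.
  + exact: measurable_EFin_sqr.
  + apply: filterS (Astar_lin_ae (-1) (h_ n) h) => z + _.
    by rewrite scaleN1r mulN1r !(addrC (- _)) => ->.
- exact: cvg_cst.
- apply: cvg_EFin; first exact: nearW.
  by rewrite -(mulr0 0); apply: cvgM; exact: dist_to0.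
Unshelve. all: by end_near. Qed.

Lemma Astar_rep_closed (g : Z -> H) :
  closed [set h | {ae P, forall z, Astar h z = ip h (g z)}].
Proof.
move=> h h_cl.
have /choice[h_ h_E] : forall n, exists h',
    {ae P, forall z, Astar h' z = ip h' (g z)} /\ `|h - h'| < harmonic n.
  move=> n; have [h' [Eh' hh']] := h_cl _ (nbhsx_ballx h _ (harmonic_gt0 n)).
  by exists h'; split => //; rewrite -ball_normE in hh'.
have h_h : h_ @ \oo --> h.
  apply/cvgrPdist_lt => e e_gt0; near=> n; apply: lt_trans (h_E n).2 _.
  by near: n; exact: (near_infty_natSinv_lt (PosNum e_gt0)).
have mA x : measurable_fun setT (Astar x) by case: (TS_L2 (TS_Astar x)).
have h_rep : {ae P, forall z n, Astar (h_ n) z = ip (h_ n) (g z)}.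
  by apply: ae_foralln => n; exact: (h_E n).1.
have : {ae P, forall z,
    (fun n => Astar h z - Astar (h_ n) z) @ \oo --> Astar h z - ip h (g z)}.
  apply: filterS h_rep => z h_rep_z; under eq_fun do rewrite h_rep_z.
  by apply: cvgB; [exact: cvg_cst|exact: (cvg_ipl ipH h_h)].
move=> /(ae_limit_L2_null_eq0 (fun n => measurable_funB (mA h) (mA (h_ n)))) Astar_rep.
by apply: filterS (Astar_rep (Astar_L2_cvg h_h)) => z /eqP; rewrite subr_eq0 => /eqP.
Unshelve. all: by end_near. Qed.

Section RKHS.
Variables (T : Type) (ev : H -> T -> R) (K : T -> H).
Hypothesis V_rkhs : rkhs_structure V ip ev K.

Let V_closed : closed V. Proof. by case: V_rkhs. Qed.

Let evE h t : V h -> ev h t = ip h (K t).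
Proof. by case: V_rkhs => _ [_ [_ [_]]]; apply. Qed.

Lemma eif_ae_rkhs phi : separable_space H -> is_eif P ip Astar phi ->
  {ae P, forall z, V (phi z) /\ ev (phi z) = fun t => Astar (K t) z}.
Proof.
move=> [D [D_count D_dense]] [Z' [mZ' [PZ' phi_rep]]].
have res_ae := ae_forall_countable D_count
  (fun x _ => Astar_orthogonal_ae0 (orth_projP ipH V_closed V0 V_lin x).2).
have Z'_ae : {ae P, forall z, Z' z} by apply/ae_prob1P; exists Z'.
apply: filterS2 res_ae Z'_ae => z res_z Z'z.
have phi_V : V (phi z).
  apply: (dense_residuals_orthogonal_mem ipH V_closed V0 V_lin D_dense) => x Dx.
  by rewrite -phi_rep // res_z.
by split => //; apply: funext => t; rewrite evE // (ipC ipH) phi_rep.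
Qed.

Section RepresentedSet.
Variable g : Z -> H.
Hypothesis g_rkhs : {ae P, forall z, V (g z) /\ ev (g z) = fun t => Astar (K t) z}.
Let S := [set h | {ae P, forall z, Astar h z = ip h (g z)}].

Let S_lin a h1 h2 : S h1 -> S h2 -> S (a *: h1 + h2).
Proof.
move=> S1 S2.
have S12 : {ae P, forall z, Astar h1 z = ip h1 (g z) /\ Astar h2 z = ip h2 (g z)}.
  by apply: filterS2 S1 S2.
apply: filterS2 (Astar_lin_ae a h1 h2) S12 => z -> [-> ->].
by rewrite (ipZDl ipH).
Qed.

Let S_orthogonal : orthogonal ip V `<=` S.
Proof.
move=> h h_perp; apply: filterS2 (Astar_orthogonal_ae0 h_perp) g_rkhs => z -> [Vg _].
by rewrite h_perp.
Qed.

Let S_K t : S (K t).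
Proof.
apply: filterS g_rkhs => z [Vg evg].
by rewrite (ipC ipH) -evE // evg.
Qed.

Let S_all h : S h.
Proof.
have S0 : S 0 by apply: S_orthogonal => v _; exact: ip0l ipH v.
have S_closed : closed S := @Astar_rep_closed g.
have [Ph_S h_Ph_perp] := orth_projP ipH S_closed S0 S_lin h.
have /(orthogonal_sub_swap ipH V_closed V0 V_lin S_orthogonal) V_res := h_Ph_perp.
suff : h - orth_proj ip S h = 0 by move/eqP; rewrite subr_eq0 => /eqP ->.
case: V_rkhs => _ [_ [ev_inj _]]; apply: ev_inj => //; first exact: V0.
apply: funext => t; rewrite !evE //; last exact: V0.
exact: etrans (h_Ph_perp _ (S_K t)) (esym (ip0l ipH _)).
Qed.

Lemma rkhs_ae_eif : separable_version P Astar -> is_eif P ip Astar g.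
Proof.
move=> [H' [Z' [H'_count [H'_dense [mZ' [PZ' Astar_sep]]]]]].
have rep_ae := ae_forall_countable H'_count (fun h _ => S_all h).
have Z'_ae : {ae P, forall z, Z' z} by apply/ae_prob1P; exists Z'.
have : {ae P, forall z, (forall h, H' h -> Astar h z = ip h (g z)) /\ Z' z}.
  by apply: filterS2 rep_ae Z'_ae.
move=> /ae_prob1P[Z'' [mZ'' PZ'' rep]].
exists Z''; split => //; split => // h z /rep [rep_z Z'z].
have [h_ [H'h_ [h_h Astar_h_]]] := Astar_sep h z Z'z.
have ip_h_ : (fun j => Astar (h_ j) z) @ \oo --> ip h (g z).
  under eq_fun do rewrite rep_z //.
  exact: (cvg_ipl ipH h_h).
exact: norm_cvg_unique Astar_h_ ip_h_.
Qed.

End RepresentedSet.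

End RKHS.

End Adjoint.

Theorem theorem1 (R : realType) (d : measure_display) (Z : measurableType d)
  (H : completeNormedModType R) (ip : H -> H -> R)
  (lam : {measure set Z -> \bar R}) (M : set (probability Z R))
  (P : probability Z R) (nu : probability Z R -> H)
  (A : (Z -> R) -> H) (Astar : H -> Z -> R)
  (T : Type) (ev : H -> T -> R) (K : T -> H) :
  polish_measurable Z R ->
  inner_product ip -> separable_space H ->
  sigma_finite setT lam ->
  (forall Q, M Q -> Q `<< lam) ->
  M P ->
  local_parameter lam M P nu A ->
  adjoint_version P (tangent_space lam M P) A ip Astar ->
  separable_version P Astar ->
  rkhs_structure (A @` tangent_space lam M P) ip ev K ->
  let phit : Z -> T -> R := fun z t => Astar (K t) z in
  (forall phi : Z -> H, is_eif P ip Astar phi ->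
     exists Z' : set Z, measurable Z' /\ P Z' = 1%E /\
       forall z, Z' z -> (A @` tangent_space lam M P) (phi z) /\ ev (phi z) = phit z) /\
  ((exists g : Z -> H, L2H P g /\
      exists Z' : set Z, measurable Z' /\ P Z' = 1%E /\
        forall z, Z' z -> (A @` tangent_space lam M P) (g z) /\ ev (g z) = phit z) ->
   exists phi : Z -> H, is_eif P ip Astar phi).
Proof.
move=> _ ipH H_sep _ _ _ [A_lin [A_bounded _]] Astar_adj Astar_sep V_rkhs phit.
have TS_L2 s : tangent_space lam M P s -> L2 P s by case.
have TS_lin := @tangent_space_lin _ _ _ lam M P.
split=> [phi phi_eif|[g [_ [Z' [mZ' [PZ' g_rkhs]]]]]].
  have /ae_prob1P[Z' [mZ' PZ' phi_rkhs]] :=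
    eif_ae_rkhs ipH TS_L2 TS_lin A_lin Astar_adj V_rkhs H_sep phi_eif.
  by exists Z'.
exists g; apply: (rkhs_ae_eif ipH TS_L2 TS_lin A_lin A_bounded Astar_adj V_rkhs) => //.
by apply/ae_prob1P; exists Z'.
Qed.
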